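(* Fix a master $m$ with $L_m>0$ and a finite nonempty set $\Omega_m$ of workers serving it, with parameters $u_{m,n}>0$, $a_{m,n}>0$ for $n\in\Omega_m$. Consider the problem $$\min_{\{l_{m,n}\}_{n\in\Omega_m},\,t_m} \; t_m \quad\text{s.t.}\quad L_m-\sum_{n\in\Omega_m} l_{m,n}\left(1-e^{-\frac{u_{m,n}}{l_{m,n}}\left(t_m-a_{m,n}l_{m,n}\right)}\right)\le 0,\qquad l_{m,n}\ge 0\ \ \forall n\in\Omega_m.$$ For each $n\in\Omega_m$ define $$\phi_{m,n}=\frac{1}{u_{m,n}}\left[-\mathcal{W}_{-1}\!\left(-e^{-u_{m,n}a_{m,n}-1}\right)-1\right],$$ where $\mathcal{W}_{-1}$ is the lower branch of the Lambert W function (i.e. for $x\le -1$, $\mathcal{W}_{-1}(xe^x)=x$). Then the optimal load allocation and the minimum approximate completion time are $$l^*_{m,n}=\frac{L_m}{\phi_{m,n}\sum_{n'\in \Omega_m} \frac{u_{m,n'}}{1+u_{m,n'}\phi_{m,n'}}},\qquad t_m^*= \frac{L_m}{\sum_{n'\in \Omega_m} \frac{u_{m,n'}}{1+u_{m,n'}\phi_{m,n'}}}.$$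
   Context: Setting: master $m$ needs $L_m$ results (products of MDS-coded rows of its matrix with its vector); worker $n\in\Omega_m$ is allocated $l_{m,n}$ coded rows, and the time for worker $n$ to process $l$ rows is a shifted exponential random variable with $\mathbb{P}[T\le t]=1-e^{-\frac{u_{m,n}}{l}(t-a_{m,n}l)}$ for $t\ge a_{m,n}l$ and $0$ otherwise. The constraint says the expected number of results received by time $t_m$ is at least $L_m$; load values are treated as nonnegative reals. *)

From HB Require Import structures.
From mathcomp Require Import all_boot all_order all_algebra.
From mathcomp Require Import all_classical all_reals all_analysis.
Set Implicit Arguments. Unset Strict Implicit. Unset Printing Implicit Defensive.
Import Order.TTheory GRing.Theory Num.Theory.
Local Open Scope ring_scope.
Local Open Scope classical_set_scope.

(* Lower branch of the Lambert W function: W_{-1}(y) is the (unique, for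
   -1/e <= y < 0) x <= -1 with x * e^x = y.  Chosen via xget (default 0 if
   no such x exists). *)
Definition LambertWm1 {R : realType} (y : R) : R :=
  xget 0 [set x : R | x <= -1 /\ x * expR x = y].

Definition phi {R : realType} (u a : R) : R :=
  u^-1 * (- LambertWm1 (- expR (- (u * a) - 1)) - 1).

Definition expected_results {R : realType} (u a l t : R) : R :=
  l * (1 - expR (- (u / l) * (t - a * l))).

Definition feasible {R : realType} {Omega : finType} (L : R) (u a : Omega -> R)
    (l : Omega -> R) (t : R) : Prop :=
  L - \sum_(n : Omega) expected_results (u n) (a n) (l n) t <= 0 /\
  (forall n, 0 <= l n).

(* The Lambert-W formula makes [phi] the solution of the balance equation
   [e^(u (a - phi)) (1 + u phi) = 1].  With it, [1 + x <= e^x] shows that a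
   worker given any load [l > 0] returns at most [t u / (1 + u phi)] results by
   time [t], with equality at [l = t / phi].  Summing over the workers, no
   feasible time is below [L / S], and the loads [t* / phi] attain [L / S]. *)
From HB Require Import structures.
From mathcomp Require Import all_boot all_order all_algebra.
From mathcomp Require Import all_classical all_reals all_analysis.
From mathcomp Require Import ring lra.
Import Order.TTheory GRing.Theory Num.Theory numFieldNormedType.Exports.
Local Open Scope ring_scope.

Section LowerLambert.
Context {R : realType}.

Lemma mulr_expR_ge {z E : R} : 0 < E -> 4 * E + 1 <= z -> z * E <= expR z.
Proof.
move=> E_gt0 z_ge.
have half_le : 1 + z / 2 <= expR (z / 2) := expR_ge1Dx (z / 2).
have sq_le : (1 + z / 2) * (1 + z / 2) <= expR (z / 2) * expR (z / 2).
  by apply: ler_pM => //; lra.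
have -> : expR z = expR (z / 2) * expR (z / 2) by rewrite -expRD -splitr.
nra.
Qed.

Lemma LambertWm1_spec (y : R) : - expR (-1) <= y < 0 ->
  LambertWm1 y <= -1 /\ LambertWm1 y * expR (LambertWm1 y) = y.
Proof.
case/andP=> y_ge y_lt0.
apply: (@xgetPex _ 0 [set x : R | x <= -1 /\ x * expR x = y]).
pose E := - y^-1; pose z := 4 * E + 1.
have E_gt0 : 0 < E by rewrite oppr_gt0 invr_lt0.
have mz_le : - z <= -1 by rewrite /z; lra.
(* On [[-z, -1]], [x e^x] decreases from [-z e^(-z) >= y] to [-e^(-1) <= y]. *)
have at_z : y <= - z * expR (- z).
  have zE_le : z * E <= expR z by exact: mulr_expR_ge E_gt0 (lexx _).
  have yE : y * E = -1 by rewrite /E mulrN mulfV ?ltr0_neq0.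
  rewrite expRN ler_pdivlMr ?expR_gt0 //; nra.
have at_m1 : -1 * expR (-1) <= y by rewrite mulN1r.
have cont : continuous (fun x : R => x * expR x).
  by move=> x; apply: cvgM; [exact: cvg_id | exact: continuous_expR].
have [|x x_in xexp_eq] := @IVT R _ (- z) (-1) y mz_le (continuous_subspaceT cont).
- by rewrite /= ge_min le_max at_z at_m1 !orbT.
by exists x; move: x_in; rewrite in_itv /= => /andP[].
Qed.

End LowerLambert.

Section Phi.
Context {R : realType} {u a : R}.
Hypotheses (u_gt0 : 0 < u) (a_gt0 : 0 < a).

Let W := LambertWm1 (- expR (- (u * a) - 1)).

Let W_spec : W <= -1 /\ W * expR W = - expR (- (u * a) - 1).
Proof.
apply: LambertWm1_spec; rewrite oppr_lt0 expR_gt0 andbT lerN2 ler_expR.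
by rewrite lerBlDr addrC subrr oppr_le0 ltW ?mulr_gt0.
Qed.

Let u_phi : u * phi u a = - W - 1.
Proof. by rewrite /phi mulVKf ?gt_eqF. Qed.

Lemma phi_gt0 : 0 < phi u a.
Proof.
have [W_le W_eq] := W_spec.
have W_neq : W != -1.
  apply/eqP=> W_m1; move: W_eq; rewrite W_m1 mulN1r => /oppr_inj /expR_inj.
  have := mulr_gt0 u_gt0 a_gt0; lra.
rewrite -(pmulr_rgt0 _ u_gt0) u_phi.
have : W < -1 by rewrite lt_neqAle W_neq W_le.
lra.
Qed.

Lemma phi_balance : expR (u * a - u * phi u a) * (1 + u * phi u a) = 1.
Proof.
have [_ W_eq] := W_spec.
rewrite u_phi.
have -> : u * a - (- W - 1) = W + (u * a + 1) by ring.
rewrite expRD.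
have -> : expR W * expR (u * a + 1) * (1 + (- W - 1)) =
          - (W * expR W) * expR (u * a + 1) by ring.
by rewrite W_eq opprK -expRD addrACA !addNr addr0 expR0.
Qed.

End Phi.

Section ExpectedResults.
Context {R : realType} {u a p : R}.
Hypothesis balance : expR (u * a - u * p) * (1 + u * p) = 1.

Let rate_eq : u / (1 + u * p) = u * expR (u * a - u * p).
Proof.
have rate_neq0 : 1 + u * p != 0.
  by apply/eqP=> rate0; move: balance; rewrite rate0 mulr0 => /eqP; rewrite eq_sym oner_eq0.
by rewrite (canRL (mulfK rate_neq0) balance) mul1r.
Qed.

(* Tangent-line bound: [1 + x <= e^x] at [x = u p - u t / l]. *)
Lemma expected_results_le_tangent (l t : R) : 0 < l ->
  expected_results u a l t <= t * (u / (1 + u * p)).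
Proof.
move=> l_gt0; rewrite rate_eq /expected_results.
set k := expR (u * a - u * p).
have k_gt0 : 0 < k by exact: expR_gt0.
set x := u * p - u * t / l.
have -> : expR (- (u / l) * (t - a * l)) = k * expR x.
  by rewrite /k -expRD; congr expR; rewrite /x; field; exact: lt0r_neq0.
have tangent : 1 + x <= expR x := expR_ge1Dx x.
have at_tangent : l * k * (1 + x) = l - k * u * t.
  have -> : l * k * (1 + x) = l * (k * (1 + u * p)) - k * u * t * (l / l).
    by rewrite /x; ring.
  by rewrite balance divff ?lt0r_neq0 // !mulr1.
have := ler_wpM2l (mulr_ge0 (ltW l_gt0) (ltW k_gt0)) tangent.
lra.
Qed.

Lemma expected_results_at_tangent (t : R) : t != 0 -> p != 0 ->
  expected_results u a (t / p) t = t * (u / (1 + u * p)).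
Proof.
move=> t_neq0 p_neq0; rewrite rate_eq /expected_results.
have -> : - (u / (t / p)) * (t - a * (t / p)) = u * a - u * p by field; apply/andP.
have -> : 1 - expR (u * a - u * p) = u * p * expR (u * a - u * p).
  by rewrite -{1}balance; ring.
by field.
Qed.

Lemma expected_results_le_max (l t : R) : 0 <= u -> 0 <= l ->
  expected_results u a l t <= Num.max t 0 * (u / (1 + u * p)).
Proof.
move=> u_ge0; rewrite le_eqVlt => /predU1P[<-|l_gt0].
  rewrite /expected_results mul0r mulr_ge0 // ?le_max ?lexx ?orbT //.
  by rewrite rate_eq mulr_ge0 // ltW ?expR_gt0.
apply: le_trans (expected_results_le_tangent _ _ l_gt0) _.
apply: ler_wpM2r; last by rewrite le_max lexx.
by rewrite rate_eq mulr_ge0 // ltW ?expR_gt0.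
Qed.

End ExpectedResults.

Theorem theorem1 (R : realType) (Omega : finType) (L : R) (u a : Omega -> R) :
  (0 < #|Omega|)%N -> 0 < L ->
  (forall n, 0 < u n) -> (forall n, 0 < a n) ->
  let S := \sum_(n' : Omega) u n' / (1 + u n' * phi (u n') (a n')) in
  let lstar := fun n => L / (phi (u n) (a n) * S) in
  let tstar := L / S in
  feasible L u a lstar tstar /\
  (forall (l : Omega -> R) (t : R), feasible L u a l t -> tstar <= t).
Proof.
move=> Omega_gt0 L_gt0 u_gt0 a_gt0 S lstar tstar.
have balance n := phi_balance (u_gt0 n) (a_gt0 n).
have rate_gt0 n : 0 < u n / (1 + u n * phi (u n) (a n)).
  by apply: divr_gt0 (addr_gt0 ltr01 (mulr_gt0 _ (phi_gt0 _ _))).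
have S_gt0 : 0 < S.
  have [n0 _] := card_gt0P Omega_gt0.
  rewrite /S (bigD1 n0) //=; apply: ltr_wpDr (rate_gt0 n0).
  by apply: sumr_ge0 => n _; rewrite ltW.
have tstar_gt0 : 0 < tstar by exact: divr_gt0.
have lstarE n : lstar n = tstar / phi (u n) (a n).
  by rewrite /lstar /tstar invfM mulrA mulrAC.
split.
  split=> [|n]; last first.
    by rewrite lstarE divr_ge0 ?ltW ?(phi_gt0 (u_gt0 n) (a_gt0 n)).
  under eq_bigr => n _ do
    rewrite lstarE expected_results_at_tangent ?gt_eqF ?phi_gt0 //.
  by rewrite -mulr_sumr divfK ?gt_eqF // subrr.
move=> l t [covered l_ge0].
have returned_le : \sum_n expected_results (u n) (a n) (l n) t <= Num.max t 0 * S.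
  rewrite /S mulr_sumr; apply: ler_sum => n _.
  exact: expected_results_le_max (balance n) _ _ (ltW (u_gt0 n)) (l_ge0 n).
have : tstar <= Num.max t 0 by rewrite ler_pdivrMr //; lra.
by rewrite le_max [tstar <= 0]leNgt tstar_gt0 orbF.
Qed.
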